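(* Let $2\le k\le n$, $\ell\in\{0,\dots,n-k+1\}$ and $\lambda\in\{\ell+2,\dots,n+\ell-1\}\setminus\{n\}$. The matrix $M_\ell^\lambda$ induces the matching field $\mathcal{B}_\ell^\lambda$. In particular $\mathcal{B}_\ell^\lambda$ is a coherent matching field.
   Context: A matching field for ${\rm Gr}(k,n)$ is a choice of permutation $\Lambda(I)\in S_k$ for each $k$-subset $I=\{i_1<\dots<i_k\}$ of $[n]$. A real $k\times n$ matrix $M=(m_{ij})$ induces $\Lambda$ if for every $I$, among the terms $\mathrm{sgn}(\tau)x_{\tau(1)i_1}\cdots x_{\tau(k)i_k}$ ($\tau\in S_k$) of the minor $\det X_I$ of a $k\times n$ matrix of variables $X=(x_{ij})$, the unique term of minimal weight (weight $\sum_r m_{\tau(r),i_r}$) is the one with $\tau=\Lambda(I)$; $\Lambda$ is coherent if some matrix induces it. The intermediate matching field $\mathcal{B}_\ell^\lambda$: write $I=\{p,q,r_1,\dots,r_{k-2}\}$ with $p<q<r_1<\dots<r_{k-2}$. If $\lambda<n$: $\mathcal{B}_\ell^\lambda(I)=\mathrm{id}$ if $q\le\ell$, or $p=\ell+1<\lambda<q$, or $\ell+1<p$; otherwise $(12)$. If $\lambda>n$, set $\lambda'=\lambda-n$: $\mathcal{B}_\ell^\lambda(I)=\mathrm{id}$ if $q\le\ell$, or $p\le\lambda'<q=\ell+1$, or $\ell+1<p$; otherwise $(12)$. The matrix $M_\ell^\lambda=(m_{ij})$: let $N=n+1$. Row 1 is zero. For $3\le i\le k$, $m_{ij}=N^{i-2}(n+1-j)$.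 Row 2: if $\lambda<n$, $m_{2,j}=\ell+1-j$ for $1\le j\le\ell$, $m_{2,\ell+1}=n-\lambda+\ell+1$, $m_{2,j}=n+\ell+2-j$ for $\ell+2\le j\le\lambda$, and $m_{2,j}=n+\ell+1-j$ for $\lambda+1\le j\le n$. If $\lambda>n$ (with $\lambda'=\lambda-n$): $m_{2,j}=\ell+2-j$ for $1\le j\le\lambda'$, $m_{2,j}=\ell+1-j$ for $\lambda'+1\le j\le\ell$, $m_{2,\ell+1}=\ell-\lambda'+1$, and $m_{2,j}=n+\ell+2-j$ for $\ell+2\le j\le n$. *)

From HB Require Import structures.
From mathcomp Require Import all_boot all_order all_algebra all_fingroup.
From mathcomp Require Import reals.
Unset Printing Implicit Defensive.
Import Order.TTheory GRing.Theory Num.Theory.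
Local Open Scope ring_scope.

(* A k-subset I = {i_1 < ... < i_k} of [n] is encoded by the strictly
   increasing map r |-> i_r from 'I_k to 'I_n  (0-based: column index j of
   the paper is the ordinal with value j-1, row index r likewise). *)
Definition increasing {k n : nat} (f : {ffun 'I_k -> 'I_n}) : bool :=
  [forall r : 'I_k, forall s : 'I_k, (r < s)%N ==> (f r < f s)%N].

(* A matching field: a permutation Lambda(I) in S_k for every k-subset I
   (only its values on increasing maps matter). *)
Definition matching_field (k n : nat) := {ffun 'I_k -> 'I_n} -> 'S_k.

(* weight of the term sgn(tau) x_{tau(1) i_1} ... x_{tau(k) i_k} of det X_I *)
Definition term_weight {R : realType} {k n : nat} (M : 'M[R]_(k, n))
  (f : {ffun 'I_k -> 'I_n}) (tau : 'S_k) : R :=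
  \sum_(r < k) M (tau r) (f r).

Definition induces {R : realType} {k n : nat} (M : 'M[R]_(k, n))
  (L : matching_field k n) : Prop :=
  forall f : {ffun 'I_k -> 'I_n}, increasing f ->
    forall tau : 'S_k, tau != L f ->
      term_weight M f (L f) < term_weight M f tau.

Definition coherent (R : realType) {k n : nat} (L : matching_field k n) : Prop :=
  exists M : 'M[R]_(k, n), induces M L.

(* the transposition (12) of S_k (identity if k < 2) *)
Definition transp12 (k : nat) : 'S_k :=
  match (insub 0%N : option 'I_k), (insub 1%N : option 'I_k) with
  | Some a, Some b => tperm a b
  | _, _ => 1%g
  end.

(* The intermediate matching field B_l^lambda.  p, q are the two smallest
   elements of I (1-based). *)
Definition Bml (k n l lam : nat) : matching_field k n := fun f =>
  let s := [seq (val (f r)).+1 | r <- enum 'I_k] in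
  let p := nth 0%N s 0 in
  let q := nth 0%N s 1 in
  let is_id :=
    if (lam < n)%N then
      [|| (q <= l)%N, [&& p == l.+1, (l.+1 < lam)%N & (lam < q)%N]
        | (l.+1 < p)%N]
    else
      let lam' := (lam - n)%N in
      [|| (q <= l)%N, [&& (p <= lam')%N, (lam' < q)%N & q == l.+1]
        | (l.+1 < p)%N] in
  if is_id then 1%g else transp12 k.

(* Entries of M_l^lambda, 1-based row i and column j. *)
Definition Mentry (k n l lam : nat) (i j : nat) : int :=
  let N : int := (n.+1)%:Z in
  if i == 1%N then 0
  else if i == 2%N then
    (if (lam < n)%N then
       (if (j <= l)%N then l%:Z + 1 - j%:Z
        else if j == l.+1 then n%:Z - lam%:Z + l%:Z + 1
        else if (j <= lam)%N then n%:Z + l%:Z + 2 - j%:Z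
        else n%:Z + l%:Z + 1 - j%:Z)
     else
       let lam' := (lam - n)%N in
       (if (j <= lam')%N then l%:Z + 2 - j%:Z
        else if (j <= l)%N then l%:Z + 1 - j%:Z
        else if j == l.+1 then l%:Z - lam'%:Z + 1
        else n%:Z + l%:Z + 2 - j%:Z))
  else N ^+ (i - 2) * (n%:Z + 1 - j%:Z).

Definition Mml (R : realType) (k n l lam : nat) : 'M[R]_(k, n) :=
  \matrix_(i < k, j < n) (Mentry k n l lam i.+1 j.+1)%:~R.

From HB Require Import structures.
From mathcomp Require Import all_boot all_order all_algebra all_fingroup.
From mathcomp Require Import reals zify.
Import Order.TTheory GRing.Theory Num.Theory.
Local Open Scope ring_scope.

(* Write the weight of the term tau of det X_I as the sum over the rows r of
   m_{r, i_(tau^-1 r)}.  For r >= 3 the r-th row of M_l^lambda decreases along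
   the columns by at least N^(r-2) per step, while the rows before it vary in
   total by at most n (1 + N + ... + N^(r-3)) = N^(r-2) - 1.  So if tau^-1
   moves some row r >= 3, comparing it with a term fixing all rows >= 3 at the
   largest row where the two differ shows that tau loses.  The two terms that
   fix the rows >= 3 differ only in rows 1 and 2; row 1 is zero, and
   comparing m_{2,p} with m_{2,q} is exactly the case distinction that
   defines B_l^lambda. *)

Lemma increasingP (k n : nat) (f : {ffun 'I_k -> 'I_n}) :
  reflect {homo f : i j / (i < j)%N} (increasing f).
Proof.
apply: (iffP forallP) => [f_incr i j ij | f_incr i].
  exact: (implyP (forallP (f_incr i) j)).
by apply/forallP => j; apply/implyP; apply: f_incr.
Qed.

Lemma perm_lt_of_fix_ge {K m : nat} {s : 'S_K} :
  (forall i : 'I_K, (m <= i)%N -> s i = i) ->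
  forall i : 'I_K, (i < m)%N -> (s i < m)%N.
Proof.
move=> s_fix i i_lt; rewrite ltnNge; apply/negP => s_i_ge.
by move: (s_fix _ s_i_ge) => /perm_inj s_i; rewrite s_i leqNgt i_lt in s_i_ge.
Qed.

Definition ord_one {k : nat} : 'I_k.+2 := Ordinal (isT : (1 < k.+2)%N).

Lemma tperm01_fix_ge2 {k : nat} (i : 'I_k.+2) :
  (2 <= i)%N -> tperm ord0 ord_one i = i.
Proof. by move=> i_ge; rewrite tpermD //; apply/eqP => /(congr1 val) /=; lia. Qed.

Lemma perm_fix_ge2 {k : nat} {s : 'S_k.+2} :
  (forall i : 'I_k.+2, (2 <= i)%N -> s i = i) -> s = 1%g \/ s = tperm ord0 ord_one.
Proof.
move=> s_fix.
have small : forall i : 'I_k.+2, (i < 2)%N -> i = ord0 \/ i = ord_one.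
  by case=> [[|[|i]] i_lt] // _; [left | right]; apply: val_inj.
have s01 : s ord0 != s ord_one by rewrite (inj_eq perm_inj).
have [s0|s0] := small _ (perm_lt_of_fix_ge s_fix ord0 isT);
  have [s1|s1] := small _ (perm_lt_of_fix_ge s_fix ord_one isT);
  rewrite ?s0 ?s1 ?eqxx // in s01; [left | right]; apply/permP => i;
  rewrite ?perm1; case: (ltnP i 2) => [/small[]-> | i_ge]; rewrite ?tpermL ?tpermR //.
all: by rewrite s_fix ?tperm01_fix_ge2.
Qed.

Section PermWeight.
Context {R : numDomainType} {K n : nat} (A : 'M[R]_(K, n)) (f : 'I_K -> 'I_n).

Definition perm_weight (s : 'S_K) : R := \sum_i A i (f (s i)).

Lemma perm_weight_tperm (a b : 'I_K) : a != b ->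
  perm_weight (tperm a b) - perm_weight 1 =
  A a (f b) + A b (f a) - (A a (f a) + A b (f b)).
Proof.
move=> ab; rewrite /perm_weight -sumrB (bigD1 a) // (bigD1 b) /=; last first.
  by rewrite eq_sym.
rewrite big1 => [|i /andP[ia ib]]; last by rewrite tpermD 1?eq_sym // perm1 subrr.
by rewrite tpermL tpermR !perm1 addr0 addrACA opprD.
Qed.

Section Dominance.
Hypothesis f_incr : {homo f : i j / (i < j)%N}.
Variables (s : nat) (c g : nat -> R).
Hypothesis range_bound : forall (i : 'I_K) (j j' : 'I_n), A i j - A i j' <= c i.
Hypothesis gap : forall i : 'I_K, (s <= i)%N ->
  forall j j' : 'I_n, (j < j')%N -> A i j' + g i <= A i j.
Hypothesis dominant : forall m, (s <= m < K)%N -> \sum_(i < m) c i < g m.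

Lemma perm_weight_lt_moved (rho sigma : 'S_K) :
  (forall i : 'I_K, (s <= i)%N -> rho i = i) ->
  forall i0 : 'I_K, (s <= i0)%N -> sigma i0 != i0 ->
  perm_weight rho < perm_weight sigma.
Proof.
move=> rho_fix i0 s_i0 moved_i0.
have differ_i0 : sigma i0 != rho i0 by rewrite rho_fix.
have [m differ_m m_max] :=
  arg_maxnP (P := fun i => sigma i != rho i) (fun i : 'I_K => val i) differ_i0.
have s_m : (s <= m)%N := leq_trans s_i0 (m_max _ differ_i0).
have fixed_above : forall j : 'I_K, (m < j)%N -> sigma j = j.
  move=> j m_j; have s_j : (s <= j)%N := leq_trans s_m (ltnW m_j).
  rewrite -[RHS](rho_fix j s_j); apply/eqP; apply: contraTT m_j => differ_j.
  by rewrite -leqNgt; apply: m_max.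
have sigma_m : (sigma m < m)%N.
  case: ltngtP => // [m_lt | /val_inj sigma_m].
    move: (fixed_above _ m_lt) => /perm_inj sigma_m.
    by rewrite sigma_m ltnn in m_lt.
  by rewrite sigma_m rho_fix ?eqxx in differ_m.
pose e i := (if i == m then g m else 0) - (if (i < m)%N then c i else 0).
rewrite -subr_gt0 -sumrB; apply: (@lt_le_trans _ _ (\sum_i e i)).
  rewrite sumrB -!big_mkcond /= big_pred1_eq -(big_ord_widen _ c (ltnW (ltn_ord m))).
  by rewrite subr_gt0 dominant ?s_m /=.
apply: ler_sum => i _; rewrite /e -val_eqE /=.
case: (ltngtP i m) => [i_m|m_i|/val_inj ->].
- by rewrite sub0r -opprB lerN2.
- have s_i : (s <= i)%N := leq_trans s_m (ltnW m_i).
  by rewrite fixed_above // rho_fix // !subrr.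
- by rewrite subr0 rho_fix // lerBrDl gap // f_incr.
Qed.

End Dominance.
End PermWeight.

Lemma term_weight_perm_weight (R : realType) (k n : nat) (M : 'M[R]_(k, n))
    (f : {ffun 'I_k -> 'I_n}) (tau : 'S_k) :
  term_weight M f tau = perm_weight M f tau^-1.
Proof.
rewrite /perm_weight (reindex_inj (@perm_inj _ tau)).
by apply: eq_bigr => r _; rewrite permK.
Qed.

Lemma perm_weight_map_mx (R S : numDomainType) (phi : {additive R -> S})
    (K n : nat) (A : 'M[R]_(K, n)) (f : 'I_K -> 'I_n) (s : 'S_K) :
  perm_weight (map_mx phi A) f s = phi (perm_weight A f s).
Proof. by rewrite raddf_sum; apply: eq_bigr => i _; rewrite mxE. Qed.

Definition Bml_id (n l lam p q : nat) : bool :=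
  if (lam < n)%N then
    [|| (q <= l)%N, [&& p == l.+1, (l.+1 < lam)%N & (lam < q)%N] | (l.+1 < p)%N]
  else
    [|| (q <= l)%N, [&& (p <= lam - n)%N, (lam - n < q)%N & q == l.+1] | (l.+1 < p)%N].

Lemma transp12E (k : nat) : transp12 k.+2 = tperm ord0 ord_one.
Proof.
rewrite /transp12; case: insubP => [a _ a0|] //; case: insubP => [b _ b1|] //.
by congr tperm; apply: val_inj.
Qed.

Lemma BmlE (k n l lam : nat) (f : {ffun 'I_k.+2 -> 'I_n}) :
  Bml k.+2 n l lam f =
  if Bml_id n l lam (f ord0).+1 (f ord_one).+1 then 1%g else tperm ord0 ord_one.
Proof.
have nth_f (r : 'I_k.+2) : nth 0%N [seq (val (f r)).+1 | r <- enum 'I_k.+2] r = (f r).+1.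
  by rewrite (nth_map ord0) ?size_enum_ord ?ltn_ord // nth_ord_enum.
by rewrite /Bml (nth_f ord0) (nth_f ord_one) transp12E.
Qed.

Definition Mml_int (k n l lam : nat) : 'M[int]_(k, n) :=
  \matrix_(i < k, j < n) Mentry k n l lam i.+1 j.+1.

Lemma Bml_fix_ge2 (k n l lam : nat) (f : {ffun 'I_k.+2 -> 'I_n}) :
  forall i : 'I_k.+2, (2 <= i)%N -> Bml k.+2 n l lam f i = i.
Proof.
by move=> i i_ge; rewrite BmlE; case: ifP => _; rewrite ?perm1 ?tperm01_fix_ge2.
Qed.

Lemma Bml_inv (k n l lam : nat) (f : {ffun 'I_k.+2 -> 'I_n}) :
  ((Bml k.+2 n l lam f)^-1 = Bml k.+2 n l lam f)%g.
Proof. by rewrite BmlE; case: ifP => _; rewrite ?invg1 ?tpermV. Qed.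

Lemma Mml_int_map (R : realType) (k n l lam : nat) :
  Mml R k n l lam = map_mx intr (Mml_int k n l lam).
Proof. by apply/matrixP => i j; rewrite !mxE. Qed.

Definition Mml_range (n i : nat) : int :=
  if i is i'.+1 then n%:Z * (n.+1)%:Z ^+ i' else 0.

Definition Mml_gap (n i : nat) : int := (n.+1)%:Z ^+ i.-1.

Lemma sum_Mml_range (n m : nat) : \sum_(i < m) Mml_range n i = Mml_gap n m - 1.
Proof.
case: m => [|m]; first by rewrite big_ord0 /Mml_gap expr0 subrr.
rewrite big_ord_recl add0r /Mml_gap /= subrX1 mulr_sumr.
by apply: eq_bigr => i _; rewrite -addn1 PoszD addrK.
Qed.

Lemma Mentry_row1 (k n l lam j : nat) : Mentry k n l lam 1 j = 0.
Proof. by []. Qed.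

Lemma Mentry_high (k n l lam i j : nat) : (2 <= i)%N ->
  Mentry k n l lam i.+1 j = (n.+1)%:Z ^+ i.-1 * (n%:Z + 1 - j%:Z).
Proof. by case: i => [|[|i]] // _; rewrite /Mentry /= subSS subn0. Qed.

Lemma Mml_int_gap (k n l lam : nat) (i : 'I_k) : (2 <= i)%N ->
  forall j j' : 'I_n, (j < j')%N ->
  Mml_int k n l lam i j' + Mml_gap n i <= Mml_int k n l lam i j.
Proof.
move=> i_ge j j' jj'; rewrite !mxE !Mentry_high // /Mml_gap.
have : 0 <= (n.+1)%:Z ^+ i.-1 by apply: exprn_ge0.
move: ((n.+1)%:Z ^+ i.-1) => P; nia.
Qed.

Section MmlOptimal.
Variables (n l lam : nat).
Hypotheses (l_lt_n : (l < n)%N) (lam_ge : (l + 2 <= lam)%N)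
  (lam_le : (lam <= n + l - 1)%N) (lam_neq : lam != n).

Lemma Mentry_row2_bounds (k j : nat) : (1 <= j <= n)%N ->
  1 <= Mentry k n l lam 2 j <= n%:Z.
Proof. by move=> *; rewrite /Mentry /=; repeat case: ifP => ?; lia. Qed.

Lemma Mentry_row2_Bml (k p q : nat) : (1 <= p)%N -> (p < q <= n)%N ->
  if Bml_id n l lam p q then Mentry k n l lam 2 q < Mentry k n l lam 2 p
  else Mentry k n l lam 2 p < Mentry k n l lam 2 q.
Proof.
by move=> *; rewrite /Bml_id /Mentry /=; case: ltnP => ?; repeat case: ifP => ?; lia.
Qed.

Lemma Mml_int_range (k : nat) (i : 'I_k) (j j' : 'I_n) :
  Mml_int k n l lam i j - Mml_int k n l lam i j' <= Mml_range n i.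
Proof.
rewrite !mxE /Mml_range; case: i => [[|[|i]] i_lt] /=.
- by rewrite !Mentry_row1 subrr.
- have := Mentry_row2_bounds k j.+1; have := Mentry_row2_bounds k j'.+1.
  rewrite expr0 mulr1 !ltn_ord; lia.
- rewrite !Mentry_high //=.
  have : 0 <= (n.+1)%:Z ^+ i.+1 by apply: exprn_ge0.
  move: ((n.+1)%:Z ^+ i.+1) (ltn_ord j) (ltn_ord j') => P.
  move: (val j) (val j') => x y; nia.
Qed.

Lemma perm_weight_Bml_lt_fix_ge2 (k : nat) (f : {ffun 'I_k.+2 -> 'I_n})
    (sigma : 'S_k.+2) :
  increasing f -> (forall i : 'I_k.+2, (2 <= i)%N -> sigma i = i) ->
  sigma != Bml k.+2 n l lam f ->
  perm_weight (Mml_int k.+2 n l lam) f (Bml k.+2 n l lam f) <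
  perm_weight (Mml_int k.+2 n l lam) f sigma.
Proof.
move=> /increasingP f_incr sigma_fix.
have swap := perm_weight_tperm (Mml_int k.+2 n l lam) f ord0 ord_one isT.
rewrite !mxE !Mentry_row1 !add0r in swap.
have f01 : ((f ord0).+1 < (f ord_one).+1 <= n)%N by rewrite ltnS f_incr //= ltn_ord.
have order := Mentry_row2_Bml k.+2 _ _ (ltn0Sn _) f01.
rewrite BmlE; case: (perm_fix_ge2 sigma_fix) => ->; case: Bml_id order => order;
  rewrite ?eqxx // => _.
- by rewrite -subr_gt0 -opprB swap oppr_gt0 subr_lt0.
- by rewrite -subr_gt0 swap subr_gt0.
Qed.

Lemma perm_weight_Bml_lt_moved (k : nat) (f : {ffun 'I_k.+2 -> 'I_n})
    (sigma : 'S_k.+2) :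
  increasing f -> forall i0 : 'I_k.+2, (2 <= i0)%N -> sigma i0 != i0 ->
  perm_weight (Mml_int k.+2 n l lam) f (Bml k.+2 n l lam f) <
  perm_weight (Mml_int k.+2 n l lam) f sigma.
Proof.
move=> /increasingP f_incr.
apply: (perm_weight_lt_moved _ _ f_incr 2 (Mml_range n) (Mml_gap n)).
- exact: Mml_int_range.
- exact: Mml_int_gap.
- by move=> m _; rewrite sum_Mml_range; lia.
- exact: Bml_fix_ge2.
Qed.

End MmlOptimal.

Theorem proposition2p8 (R : realType) (k n l lam : nat) :
  (2 <= k)%N -> (k <= n)%N -> (l <= n - k + 1)%N ->
  (l + 2 <= lam)%N -> (lam <= n + l - 1)%N -> lam != n ->
  induces (Mml R k n l lam) (Bml k n l lam) /\ coherent R (Bml k n l lam).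
Proof.
move=> k_ge k_le l_le lam_ge lam_le lam_neq.
have l_lt_n : (l < n)%N by lia.
suff induced : induces (Mml R k n l lam) (Bml k n l lam).
  by split; last exists (Mml R k n l lam).
case: k k_ge k_le l_le => [|[|k]] // _ _ _ f f_incr tau tau_neq.
rewrite !term_weight_perm_weight Mml_int_map !perm_weight_map_mx ltr_int Bml_inv.
have [i0 /andP[i0_ge moved] | fixed] :=
  pickP [pred i : 'I_k.+2 | (2 <= i)%N && (tau^-1 i != i)]%g.
  exact: perm_weight_Bml_lt_moved moved.
apply: perm_weight_Bml_lt_fix_ge2 => //.
  by move=> i i_ge; apply/eqP; move: (fixed i); rewrite /= i_ge => /negbFE.
by rewrite -Bml_inv (inj_eq invg_inj).
Qed.
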